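(* Let $W:\mathcal{X}\to\mathcal{Y}$ be a channel with $\mathcal{Y}$ finite, let $n\in\mathbb{N}$, $0<\delta\le\sqrt{n}\log|\mathcal{Y}|$, and let $x^n,x'^n\in\mathcal{X}^n$ satisfy $1-\frac12\|W_{x^n}-W_{x'^n}\|_1\le\epsilon$. Then \[ W_{x'^n}(\mathcal{T}^\delta_{x^n})\le 2\exp\!\left(-\delta^2/36K(|\mathcal{Y}|)\right)+\epsilon\left(1+2^{2\delta\sqrt{n}}\,2^{H(W_{x^n})-H(W_{x'^n})}\right). \]
   Context: A channel $W:\mathcal{X}\to\mathcal{Y}$ ($\mathcal{X}$ a measurable space) is a measurable map $x\mapsto W_x\in\mathcal{P}(\mathcal{Y})$; $W_{x^n}(y^n)=\prod_{i=1}^nW_{x_i}(y_i)$. Logarithms and exponentials are base 2. $\|P-Q\|_1=\sum_y|P(y)-Q(y)|$. $H$ denotes Shannon entropy (base 2), so $H(W_{x^n})=\sum_iH(W_{x_i})$. The conditional typical set is $\mathcal{T}^\delta_{x^n}=\{y^n\in\mathcal{Y}^n:|\log W_{x^n}(y^n)+H(W_{x^n})|\le\delta\sqrt{n}\}$, and $K(d)=(\log\max\{d,3\})^2$. *)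

From HB Require Import structures.
From mathcomp Require Import all_boot all_order all_algebra.
From mathcomp Require Import all_classical all_reals all_analysis.
Set Implicit Arguments. Unset Strict Implicit. Unset Printing Implicit Defensive.
Import Order.TTheory GRing.Theory Num.Theory.
Local Open Scope ring_scope.

Definition log2 {R : realType} (x : R) : R := ln x / ln 2.

Definition is_channel {d : measure_display} {X : measurableType d}
  {Y : finType} {R : realType} (W : X -> Y -> R) : Prop :=
  [/\ forall x y, 0 <= W x y,
      forall x, \sum_(y : Y) W x y = 1
    & forall y, measurable_fun setT (fun x => W x y)].

Definition entropy {Y : finType} {R : realType} (P : Y -> R) : R :=
  - \sum_(y : Y) (if P y == 0 then 0 else P y * log2 (P y)).

Definition Wn {X : Type} {Y : finType} {R : realType} (W : X -> Y -> R)
  (n : nat) (xn : 'I_n -> X) (yn : {ffun 'I_n -> Y}) : R :=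
  \prod_(i < n) W (xn i) (yn i).

Definition Hn {X : Type} {Y : finType} {R : realType} (W : X -> Y -> R)
  (n : nat) (xn : 'I_n -> X) : R :=
  \sum_(i < n) entropy (W (xn i)).

(* conditional typical set T^delta_{x^n}; log 0 = -oo so W_{x^n}(y^n) > 0 is required *)
Definition typical {X : Type} {Y : finType} {R : realType} (W : X -> Y -> R)
  (n : nat) (xn : 'I_n -> X) (delta : R) : {set {ffun 'I_n -> Y}} :=
  [set yn | (0 < Wn W xn yn) &&
     (`| log2 (Wn W xn yn) + Hn W xn | <= delta * Num.sqrt (n%:R))].

Definition l1n {X : Type} {Y : finType} {R : realType} (W : X -> Y -> R)
  (n : nat) (xn xn' : 'I_n -> X) : R :=
  \sum_(yn : {ffun 'I_n -> Y}) `| Wn W xn yn - Wn W xn' yn |.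

Definition Kc {R : realType} (d : R) : R := (log2 (Num.max d 3)) ^+ 2.

From HB Require Import structures.
From mathcomp Require Import all_boot all_order all_algebra.
From mathcomp Require Import all_classical all_reals all_analysis.
From mathcomp Require Import ring lra.
Import Order.TTheory GRing.Theory Num.Theory.
Local Open Scope ring_scope.

(* Write P = W_{x^n}, Q = W_{x'^n} and c = 2^(2 delta sqrt n) 2^(H(P) - H(Q)).
   On the typical set of P, a y^n whose surprisal satisfies
   log Q(y^n) + H(Q) <= delta sqrt n has Q(y^n) <= c P(y^n), hence
   Q(y^n) <= (1 + c) min(P, Q)(y^n); these y^n carry Q-mass at most
   (1 + c) (1 - ||P - Q||_1 / 2) <= eps (1 + c).  The other y^n lie in the upper
   tail of the centred surprisal, a sum of n independent terms whose second
   moments are at most 12 ln^2 max(|Y|, 3); Chernoff's bound gives them Q-mass at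
   most exp(-delta^2 ln^2 2 / (48 ln^2 max(|Y|, 3))) <= 2^(-delta^2 / 36 K(|Y|)). *)

Lemma minr_normE {R : realFieldType} (x y : R) : Num.min x y = (x + y - `|x - y|) / 2.
Proof. by case: lerP => _; field. Qed.

Lemma le_mul1D_min {R : realFieldType} (c p q : R) : 0 <= c -> 0 <= p -> 0 <= q ->
  q <= c * p -> q <= (1 + c) * Num.min p q.
Proof.
move=> c_ge0 p_ge0 q_ge0; have := mulr_ge0 c_ge0 q_ge0.
by case: (lerP p q) => _; rewrite mulrDl mul1r; lra.
Qed.

Section RealBounds.
Context {R : realType}.
Implicit Types a b u w x y M : R.

Lemma powR2E x : powR 2 x = expR (x * ln 2).
Proof. by rewrite /powR pnatr_eq0. Qed.

Lemma ln2_gt0 : 0 < ln (2 : R).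
Proof. by rewrite ln_gt0 // ltr1n. Qed.

Lemma ln_prod (I : Type) (r : seq I) (P : pred I) (f : I -> R) :
  (forall i, P i -> 0 < f i) ->
  ln (\prod_(i <- r | P i) f i) = \sum_(i <- r | P i) ln (f i).
Proof.
move=> f_gt0.
suff [] : 0 < \prod_(i <- r | P i) f i /\
          ln (\prod_(i <- r | P i) f i) = \sum_(i <- r | P i) ln (f i) by [].
elim/big_rec2: _ => [|i a b Pi [b_gt0 ln_b]]; first by rewrite ln1.
by split; [rewrite mulr_gt0 ?f_gt0 | rewrite lnM ?posrE ?f_gt0 // ln_b].
Qed.

Lemma sqr_le_2expR y : 0 <= y -> y ^+ 2 <= 2 * expR y.
Proof.
move=> y_ge0; have := expR_ge1Dxn 1 y_ge0.
by rewrite (_ : (2`!)%:R = 2 :> R) //; have := sqr_ge0 y; lra.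
Qed.

Lemma expR_le_1DxDsqr u : u <= 1/3 -> expR u <= 1 + u + u ^+ 2.
Proof.
move=> u_le.
have a_gt0 : 0 < 1 - u / 2 by lra.
have sqr_le_expRN : (1 - u / 2) ^+ 2 <= expR (- u).
  rewrite (_ : - u = 2%:R * (- (u / 2))); last by field.
  rewrite expRM_natl lerXn2r ?nnegrE ?expR_ge0 ?(ltW a_gt0) //.
  by have := expR_ge1Dx (- (u / 2)); lra.
(* (1 + u + u^2) (1 - u/2)^2 = 1 + u^2 (1 - 3u + u^2) / 4 *)
have one_le : 1 <= (1 + u + u ^+ 2) * (1 - u / 2) ^+ 2.
  have : 0 <= u ^+ 2 * (1 - 3 * u + u ^+ 2) by rewrite mulr_ge0 ?sqr_ge0 //; nra.
  rewrite !expr2; nra.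
rewrite -(ler_pM2r (exprn_gt0 2 a_gt0)); apply: le_trans one_le.
apply: le_trans (ler_wpM2l (expR_ge0 u) sqr_le_expRN) _.
by rewrite -expRD subrr expR0.
Qed.

Lemma ln3_ge1 : 1 <= ln (3 : R).
Proof.
have pow_le : (7 / 8) ^+ 8 <= expR (- 1) :> R.
  rewrite (_ : -1 = 8%:R * (- (1 / 8))); last by field.
  rewrite expRM_natl lerXn2r ?nnegrE ?expR_ge0 //.
  by have := expR_ge1Dx (- (1 / 8) : R); lra.
have e_le3 : expR 1 <= 3 :> R.
  rewrite -[expR 1]invrK -expRN -[3]invrK lef_pV2 ?posrE ?invr_gt0 ?expR_gt0 //.
  by apply: le_trans pow_le; rewrite !exprS expr0; lra.
by rewrite -ler_ln ?posrE ?expR_gt0 // expRK in e_le3.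
Qed.

Lemma ln_max3_ge1 x : 1 <= ln (Num.max x 3).
Proof.
apply: le_trans ln3_ge1 _.
by rewrite ler_ln ?posrE ?le_max ?lexx ?orbT // lt_max ltr0n orbT.
Qed.

Lemma ln2_le : ln (2 : R) <= 3 / 4.
Proof.
have pow_le : (1 + 3 / 32) ^+ 8 <= expR (3 / 4) :> R.
  rewrite (_ : 3 / 4 = 8%:R * (3 / 32)); last by field.
  by rewrite expRM_natl lerXn2r ?nnegrE ?expR_ge0 ?expR_ge1Dx //; lra.
have two_le : 2 <= expR (3 / 4) :> R.
  by apply: le_trans pow_le; rewrite !exprS expr0; lra.
by rewrite -ler_ln ?posrE ?expR_gt0 // expRK in two_le.
Qed.

(* With x = - ln u: either x <= 2 ln M, or u = e^-x is so small that
   u x^2 <= 8 u e^(x - ln M) = 8 / M. *)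
Lemma mul_sqr_ln_le M u : 0 < M -> 0 <= ln M -> 0 < u <= 1 ->
  u * ln u ^+ 2 <= 4 * ln M ^+ 2 * u + 8 / M.
Proof.
move=> M_gt0 lnM_ge0 /andP[u_gt0 u_le1].
have lnM_u_ge0 : 0 <= 4 * ln M ^+ 2 * u by rewrite !mulr_ge0 ?sqr_ge0 // ltW.
have M_ge0 : 0 <= 8 / M by rewrite divr_ge0 ?ltW.
rewrite -sqrrN; set x := - ln u.
have x_ge0 : 0 <= x by rewrite oppr_ge0 ln_le0.
have [x_le|x_gt] := leP x (2 * ln M).
  have : x ^+ 2 <= 4 * ln M ^+ 2 by nra.
  by move/(ler_wpM2l (ltW u_gt0)); lra.
have sqr_le : x ^+ 2 <= 8 * expR (x - ln M).
  have := sqr_le_2expR (x / 2) (divr_ge0 x_ge0 (ler0n R 2)).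
  rewrite expr_div_n (_ : (2 ^+ 2 : R) = 4); last by rewrite expr2 -natrM.
  have : expR (x / 2) <= expR (x - ln M) by rewrite ler_expR; lra.
  lra.
have u_expR : u * expR (x - ln M) = 1 / M.
  rewrite expRD expRN /x expRN !lnK ?posrE //.
  by rewrite mulrA divff ?gt_eqF // mul1r div1r.
by have := ler_wpM2l (ltW u_gt0) sqr_le; rewrite [u * (8 * _)]mulrCA u_expR; lra.
Qed.

Lemma ln_le_ln_maxr x y : 1 <= y -> ln x <= ln (Num.max x y).
Proof.
move=> y_ge1; have [x_le0|x_gt0] := leP x 0.
  by rewrite ln0 // ln_ge0 // le_max y_ge1 orbT.
by rewrite ler_ln ?posrE ?le_max ?lexx // (lt_le_trans x_gt0) // le_max lexx.
Qed.

Lemma mul_sqrt_ln2_le {n : nat} {delta d : R} : delta <= Num.sqrt n%:R * log2 d ->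
  delta * Num.sqrt n%:R * ln 2 <= n%:R * ln (Num.max d 3).
Proof.
set s := Num.sqrt _ => delta_le.
have n_sqr : n%:R = s ^+ 2 by rewrite sqr_sqrtr.
have s_ge0 : 0 <= s := sqrtr_ge0 _.
rewrite -mulrA; apply: le_trans (ler_wpM2r (mulr_ge0 s_ge0 (ltW ln2_gt0)) delta_le) _.
rewrite /log2 (_ : _ * _ * _ = n%:R * ln d); last by rewrite n_sqr; field; rewrite gt_eqF ?ln2_gt0.
by rewrite ler_wpM2l ?ler0n ?ln_le_ln_maxr //; lra.
Qed.

(* Both exponents are multiples of a = delta^2 ln^2 2 / ln^2 max(d, 3); the
   comparison of the factors 1/48 and ln 2 / 36 is where ln 2 <= 3/4 is used. *)
Lemma expR_le_powR2_Kc {n : nat} {delta d : R} : (0 < n)%N ->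
  expR (- ((delta * Num.sqrt n%:R * ln 2) ^+ 2 / (48 * n%:R * ln (Num.max d 3) ^+ 2)))
    <= powR 2 (- (delta ^+ 2 / (36 * Kc d))).
Proof.
move=> n_gt0.
have l_gt0 : 0 < ln (Num.max d 3) := lt_le_trans ltr01 (ln_max3_ge1 d).
set l := ln (Num.max d 3) in l_gt0 *; set a := delta ^+ 2 * ln 2 ^+ 2 / l ^+ 2.
have a_ge0 : 0 <= a := divr_ge0 (mulr_ge0 (sqr_ge0 _) (sqr_ge0 _)) (sqr_ge0 _).
rewrite powR2E ler_expR !exprMn sqr_sqrtr ?ler0n //.
have -> : delta ^+ 2 * n%:R * ln 2 ^+ 2 / (48 * n%:R * l ^+ 2) = a / 48.
  by rewrite /a; field; rewrite !gt_eqF ?ltr0n.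
have -> : delta ^+ 2 / (36 * Kc d) = a / 36.
  by rewrite /a /Kc /log2 -/l; field; rewrite !gt_eqF ?ln2_gt0.
by have := ln2_gt0; have := ln2_le; nra.
Qed.

Lemma le_powR2_log2 a b w : 0 < a -> 0 < b ->
  log2 a - log2 b <= w -> a <= powR 2 w * b.
Proof.
move=> a_gt0 b_gt0; rewrite /log2 -mulrBl ler_pdivrMr ?ln2_gt0 //.
move=> le_w; rewrite -(lnK a_gt0) -(lnK b_gt0) powR2E -expRD ler_expR.
lra.
Qed.

End RealBounds.

Definition ln_entropy {R : realType} {Y : finType} (q : Y -> R) : R :=
  - \sum_y q y * ln (q y).

Lemma entropyE {R : realType} {Y : finType} (q : Y -> R) :
  entropy q = ln_entropy q / ln 2.
Proof.
rewrite /entropy /ln_entropy /log2 mulNr mulr_suml; congr (- _).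
by apply: eq_bigr => y _; case: eqP => [->|_]; rewrite ?mul0r ?mulrA.
Qed.

Section FiniteDistribution.
Context {R : realType} {Y : finType} {q : Y -> R}.
Hypotheses (q_ge0 : forall y, 0 <= q y) (q_sum1 : \sum_y q y = 1).

Lemma distr_le1 y : q y <= 1.
Proof. by rewrite -q_sum1 (bigD1 y) //= lerDl sumr_ge0. Qed.

Lemma ln_entropy_ge0 : 0 <= ln_entropy q.
Proof.
rewrite oppr_ge0 sumr_le0 // => y _.
by rewrite mulr_ge0_le0 // ln_le0 // distr_le1.
Qed.

Lemma sum_sqr_ln_le :
  \sum_y q y * ln (q y) ^+ 2 <= 12 * ln (Num.max #|Y|%:R 3) ^+ 2.
Proof.
set M := Num.max #|Y|%:R 3.
have M_ge3 : 3 <= M by rewrite le_max lexx orbT.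
have M_gt0 : 0 < M by apply: lt_le_trans M_ge3.
have lnM_ge1 : 1 <= ln M := ln_max3_ge1 _.
have pointwise y : q y * ln (q y) ^+ 2 <= 4 * ln M ^+ 2 * q y + 8 / M.
  have [<-|q_gt0] := eqVneq 0 (q y).
    by rewrite mul0r mulr0 add0r divr_ge0 ?ltW.
  rewrite mul_sqr_ln_le // ?(le_trans _ lnM_ge1) //.
  by rewrite lt_neqAle q_gt0 q_ge0 distr_le1.
apply: le_trans (ler_sum _ (fun y _ => pointwise y)) _.
rewrite big_split /= -mulr_sumr q_sum1 mulr1 sumr_const -mulr_natr.
have : #|Y|%:R * (8 / M) <= 8.
  by rewrite mulrCA ler_piMr // ler_pdivrMr // mul1r le_max lexx.
have : 1 <= ln M ^+ 2 by rewrite expr_ge1 // (le_trans _ lnM_ge1).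
lra.
Qed.

Lemma sum_centered_surprisal : \sum_y q y * (ln_entropy q + ln (q y)) = 0.
Proof.
rewrite (eq_bigr (fun y => ln_entropy q * q y + q y * ln (q y))) => [|y _]; last by ring.
by rewrite big_split /= -mulr_sumr q_sum1 mulr1 /ln_entropy addNr.
Qed.

Lemma sum_sqr_centered_surprisal :
  \sum_y q y * (ln_entropy q + ln (q y)) ^+ 2
    = \sum_y q y * ln (q y) ^+ 2 - ln_entropy q ^+ 2.
Proof.
set H := ln_entropy q.
rewrite (eq_bigr (fun y => 2 * H * (q y * (H + ln (q y))) - H ^+ 2 * q y
                           + q y * ln (q y) ^+ 2)) => [|y _]; last by ring.
rewrite !big_split /= -!mulr_sumr sumrN -mulr_sumr sum_centered_surprisal q_sum1.
ring.
Qed.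

Lemma sqr_ln_entropy_le : ln_entropy q ^+ 2 <= \sum_y q y * ln (q y) ^+ 2.
Proof.
rewrite -subr_ge0 -sum_sqr_centered_surprisal.
by rewrite sumr_ge0 // => y _; rewrite mulr_ge0 ?sqr_ge0.
Qed.

Lemma mgf_surprisal_le lam : 0 <= lam ->
  lam ^+ 2 * \sum_y q y * ln (q y) ^+ 2 <= 1 / 9 ->
  \sum_y q y * expR (lam * (ln_entropy q + ln (q y)))
    <= expR (lam ^+ 2 * \sum_y q y * ln (q y) ^+ 2).
Proof.
move=> lam_ge0 lam_le.
set H := ln_entropy q; set E2 := \sum_y q y * ln (q y) ^+ 2.
have lamH_le : lam * H <= 1 / 3.
  have : (lam * H) ^+ 2 <= 1 / 9.
    by rewrite exprMn (le_trans _ lam_le) // ler_wpM2l ?sqr_ge0 ?sqr_ln_entropy_le.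
  have : 0 <= lam * H by rewrite mulr_ge0 ?ln_entropy_ge0.
  nra.
have pointwise y : q y * expR (lam * (H + ln (q y)))
    <= q y * (1 + lam * (H + ln (q y)) + (lam * (H + ln (q y))) ^+ 2).
  by rewrite ler_wpM2l // expR_le_1DxDsqr //; have := ln_le0 (distr_le1 y); nra.
apply: le_trans (ler_sum _ (fun y _ => pointwise y)) _.
rewrite (eq_bigr (fun y => q y + lam * (q y * (H + ln (q y)))
                           + lam ^+ 2 * (q y * (H + ln (q y)) ^+ 2))) => [|y _]; last by ring.
rewrite !big_split /= -!mulr_sumr q_sum1 sum_centered_surprisal.
rewrite sum_sqr_centered_surprisal mulr0 addr0.
apply: le_trans (expR_ge1Dx _); rewrite lerD2l ler_wpM2l ?sqr_ge0 //.
by rewrite lerBlDr lerDl sqr_ge0.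
Qed.

End FiniteDistribution.

Section ProductTail.
Context {R : realType} {Y : finType} {n : nat}.
Implicit Types (q g : 'I_n -> Y -> R) (lam t : R).

Lemma chernoff_prod q g lam t : (forall i y, 0 <= q i y) -> 0 <= lam ->
  \sum_(yn : {ffun 'I_n -> Y} | t <= \sum_i g i (yn i)) \prod_i q i (yn i)
    <= expR (- (lam * t)) * \prod_i \sum_y q i y * expR (lam * g i y).
Proof.
move=> q_ge0 lam_ge0.
have prod_ge0 (yn : {ffun 'I_n -> Y}) : 0 <= \prod_i q i (yn i).
  by rewrite prodr_ge0.
rewrite bigA_distr_bigA mulr_sumr big_mkcond /=; apply: ler_sum => yn _.
case: ifP => [t_le|_]; last first.
  by rewrite mulr_ge0 ?expR_ge0 // prodr_ge0 // => i _; rewrite mulr_ge0 ?expR_ge0.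
rewrite big_split /= -expR_sum mulrCA -expRD -mulr_sumr -{1}[\prod_i _]mulr1.
rewrite ler_wpM2l //; apply: le_trans (expR_ge1Dx _).
by rewrite lerDl addrC -mulrBr mulr_ge0 // subr_ge0.
Qed.

(* Chernoff's bound with the optimal lam = t / (24 n l^2), l = ln max(|Y|, 3);
   since E2 <= 12 l^2 and t <= n l, lam^2 E2 <= 1/48, so mgf_surprisal_le applies. *)
Lemma surprisal_tail q t :
  (forall i y, 0 <= q i y) -> (forall i, \sum_y q i y = 1) ->
  0 < t -> t <= n%:R * ln (Num.max #|Y|%:R 3) ->
  \sum_(yn : {ffun 'I_n -> Y} | t <= \sum_i (ln_entropy (q i) + ln (q i (yn i))))
      \prod_i q i (yn i)
    <= expR (- (t ^+ 2 / (48 * n%:R * ln (Num.max #|Y|%:R 3) ^+ 2))).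
Proof.
move=> q_ge0 q_sum1 t_gt0 t_le.
set l := ln (Num.max _ 3) in t_le *.
have l_ge1 : 1 <= l := ln_max3_ge1 _.
have n_gt0 : 0 < n%:R :> R.
  by rewrite -(pmulr_lgt0 _ (lt_le_trans ltr01 l_ge1)); exact: lt_le_trans t_le.
set lam := t / (24 * n%:R * l ^+ 2).
have lam_ge0 : 0 <= lam by rewrite divr_ge0 ?mulr_ge0 ?sqr_ge0 ?ltW //; lra.
have laml_le : lam * l <= 1 / 24.
  have -> : lam * l = t / (24 * (n%:R * l)) by rewrite /lam; field; rewrite ?gt_eqF //; lra.
  by rewrite ler_pdivrMr ?mulr_gt0 //; lra.
have laml_small : 12 * (lam * l) ^+ 2 <= 1 / 9.
  have : 0 <= lam * l by rewrite mulr_ge0 //; lra.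
  by rewrite expr2; nra.
have mgf_le i : \sum_y q i y * expR (lam * (ln_entropy (q i) + ln (q i y)))
    <= expR (12 * (lam * l) ^+ 2).
  have E2_le : lam ^+ 2 * \sum_y q i y * ln (q i y) ^+ 2 <= 12 * (lam * l) ^+ 2.
    rewrite (_ : 12 * _ = lam ^+ 2 * (12 * l ^+ 2)); last by ring.
    by rewrite ler_wpM2l ?sqr_ge0 ?(sum_sqr_ln_le (q_ge0 i) (q_sum1 i)).
  apply: le_trans (mgf_surprisal_le (q_ge0 i) (q_sum1 i) lam lam_ge0 _) _.
    exact: le_trans E2_le laml_small.
  by rewrite ler_expR.
apply: le_trans (chernoff_prod q (fun i y => ln_entropy (q i) + ln (q i y)) lam t
  q_ge0 lam_ge0) _.
have prod_le : \prod_i \sum_y q i y * expR (lam * (ln_entropy (q i) + ln (q i y)))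
    <= \prod_(i < n) expR (12 * (lam * l) ^+ 2).
  apply: ler_prod => i _; rewrite mgf_le andbT.
  by rewrite sumr_ge0 // => y _; rewrite mulr_ge0 ?expR_ge0.
have lam_opt : - (lam * t) + n%:R * (12 * (lam * l) ^+ 2)
    = - (t ^+ 2 / (48 * n%:R * l ^+ 2)).
  by rewrite /lam; field; rewrite !gt_eqF //; lra.
apply: le_trans (ler_wpM2l (expR_ge0 _) prod_le) _.
by rewrite prodr_const card_ord -expRM_natl -expRD lam_opt.
Qed.
End ProductTail.

Section ProductChannel.
Context {R : realType} {X : Type} {Y : finType} {n : nat} {W : X -> Y -> R}.
Hypotheses (W_ge0 : forall x y, 0 <= W x y) (W_sum1 : forall x, \sum_y W x y = 1).
Implicit Types (xs : 'I_n -> X) (yn : {ffun 'I_n -> Y}).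

Lemma Wn_ge0 xs yn : 0 <= Wn W xs yn.
Proof. by rewrite prodr_ge0. Qed.

Lemma sum_Wn xs : \sum_yn Wn W xs yn = 1.
Proof. by rewrite /Wn -(bigA_distr_bigA (fun i => W (xs i))) big1. Qed.

Lemma sum_min_Wn xs xs' :
  \sum_yn Num.min (Wn W xs yn) (Wn W xs' yn) = 1 - 2^-1 * l1n W xs xs'.
Proof.
under eq_bigr do rewrite minr_normE.
by rewrite -mulr_suml sumrB big_split /= !sum_Wn /l1n; field.
Qed.

Lemma log2_Wn_addHn xs yn : 0 < Wn W xs yn ->
  log2 (Wn W xs yn) + Hn W xs
    = (\sum_i (ln_entropy (W (xs i)) + ln (W (xs i) (yn i)))) / ln 2.
Proof.
move=> Wn_gt0.
have W_gt0 i : 0 < W (xs i) (yn i).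
  rewrite lt_neqAle W_ge0 andbT eq_sym.
  by move: Wn_gt0; rewrite lt_neqAle eq_sym => /andP[/prodf_neq0 /(_ i isT)].
rewrite /log2 /Wn ln_prod // /Hn big_split /= mulrDl addrC; congr (_ + _).
by rewrite mulr_suml; apply: eq_bigr => i _; rewrite entropyE.
Qed.

Lemma typical_Wn_le xs xs' delta yn :
  yn \in typical W xs delta -> 0 < Wn W xs' yn ->
  log2 (Wn W xs' yn) + Hn W xs' <= delta * Num.sqrt n%:R ->
  Wn W xs' yn <= powR 2 (2 * delta * Num.sqrt n%:R) * powR 2 (Hn W xs - Hn W xs')
                 * Wn W xs yn.
Proof.
rewrite inE => /andP[Wn_gt0 /ler_normlP[lower _]] Wn'_gt0 upper.
rewrite !powR2E -expRD -mulrDl -powR2E le_powR2_log2 //.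
lra.
Qed.

Lemma typical_Wn_le_tail xs xs' delta yn : yn \in typical W xs delta ->
  Wn W xs' yn <=
    (if delta * Num.sqrt n%:R * ln 2
          <= \sum_i (ln_entropy (W (xs' i)) + ln (W (xs' i) (yn i)))
     then Wn W xs' yn else 0)
    + (1 + powR 2 (2 * delta * Num.sqrt n%:R) * powR 2 (Hn W xs - Hn W xs'))
      * Num.min (Wn W xs yn) (Wn W xs' yn).
Proof.
move=> yn_typ.
have c_ge0 : 0 <= powR 2 (2 * delta * Num.sqrt n%:R) * powR 2 (Hn W xs - Hn W xs').
  by rewrite mulr_ge0 ?powR_ge0.
have [Wn_eq0|Wn_neq0] := eqVneq (Wn W xs' yn) 0.
  by rewrite Wn_eq0 if_same add0r mulr_ge0 ?addr_ge0 // le_min Wn_ge0 ?lexx.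
have Wn_gt0 : 0 < Wn W xs' yn by rewrite lt_neqAle eq_sym Wn_neq0 Wn_ge0.
case: ifP => [_|not_tail]; first by rewrite lerDl mulr_ge0 ?addr_ge0 // le_min !Wn_ge0.
rewrite add0r le_mul1D_min ?Wn_ge0 // typical_Wn_le //.
rewrite log2_Wn_addHn // ler_pdivrMr ?ln2_gt0 // ltW // ltNge.
by rewrite not_tail.
Qed.

End ProductChannel.

Theorem lemma2 (R : realType) (d : measure_display) (X : measurableType d)
  (Y : finType) (W : X -> Y -> R) (n : nat) (delta eps : R)
  (xn xn' : 'I_n -> X) :
  is_channel W ->
  0 < delta -> delta <= Num.sqrt (n%:R) * log2 (#|Y|%:R) ->
  1 - (2%:R)^-1 * l1n W xn xn' <= eps ->
  \sum_(yn in typical W xn delta) Wn W xn' yn <=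
    2%:R * powR 2 (- (delta ^+ 2 / (36%:R * Kc (#|Y|%:R))))
    + eps * (1 + powR 2 (2%:R * delta * Num.sqrt (n%:R))
                 * powR 2 (Hn W xn - Hn W xn')).
Proof.
move=> [W_ge0 W_sum1 _] delta_gt0 delta_le eps_ge.
have n_gt0 : (0 < n)%N.
  by rewrite lt0n; apply: contraTneq delta_le => ->; rewrite sqrtr0 mul0r -ltNge.
set c := powR 2 (2%:R * delta * _) * powR 2 _.
set t := delta * Num.sqrt n%:R * ln 2.
have t_gt0 : 0 < t by rewrite !mulr_gt0 ?sqrtr_gt0 ?ltr0n ?ln2_gt0.
have c_ge0 : 0 <= c by rewrite mulr_ge0 ?powR_ge0.
have sum_le : \sum_(yn in typical W xn delta) Wn W xn' yn <=
    \sum_(yn : {ffun 'I_n -> Y})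
      ((if t <= \sum_i (ln_entropy (W (xn' i)) + ln (W (xn' i) (yn i)))
        then Wn W xn' yn else 0)
       + (1 + c) * Num.min (Wn W xn yn) (Wn W xn' yn)).
  rewrite big_mkcond /=; apply: ler_sum => yn _.
  case: ifP => [/(typical_Wn_le_tail W_ge0 xn xn') //|_].
  rewrite addr_ge0 ?mulr_ge0 ?addr_ge0 ?le_min ?Wn_ge0 //.
  by case: ifP; rewrite ?Wn_ge0.
apply: le_trans sum_le _; rewrite big_split /= -big_mkcond -mulr_sumr sum_min_Wn //.
apply: lerD; last by rewrite mulrC ler_wpM2r // addr_ge0.
apply: le_trans (surprisal_tail (fun i => W (xn' i)) t (fun i => W_ge0 (xn' i))
  (fun i => W_sum1 (xn' i)) t_gt0 (mul_sqrt_ln2_le delta_le)) _.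
apply: le_trans (expR_le_powR2_Kc n_gt0) _.
by have := powR_ge0 2 (- (delta ^+ 2 / (36 * Kc #|Y|%:R))); lra.
Qed.
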